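(* Chooser has a winning strategy in the Picker–Chooser game on the $4\times 4$ torus $4^2$.
   Context: The $4\times 4$ torus game $4^2$ is the hypergraph with vertex set $\mathbb Z_4\times\mathbb Z_4$ and the 16 edges $\{(x,y): y=c\}$, $\{(x,y):x=c\}$, $\{(x,y): x-y=c\}$, $\{(x,y):x+y=c\}$ for $c\in\mathbb Z_4$. In the Picker–Chooser game, in each round Picker selects a pair of untaken vertices and Chooser keeps one of them and gives the other to Picker, until all 16 vertices are taken; Picker plays as Maker (wins by owning all vertices of some edge) and Chooser plays as Breaker (wins by owning at least one vertex of every edge). *)

From HB Require Import structures.
From mathcomp Require Import all_boot all_order all_algebra.
Set Implicit Arguments. Unset Strict Implicit. Unset Printing Implicit Defensive.
Import GRing.Theory.
Local Open Scope ring_scope.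

Definition vtx := ('Z_4 * 'Z_4)%type.

Definition row_edge (c : 'Z_4) : {set vtx} := [set p : vtx | p.2 == c].
Definition col_edge (c : 'Z_4) : {set vtx} := [set p : vtx | p.1 == c].
Definition diag_edge (c : 'Z_4) : {set vtx} := [set p : vtx | p.1 - p.2 == c].
Definition adiag_edge (c : 'Z_4) : {set vtx} := [set p : vtx | p.1 + p.2 == c].

Definition torus_edges : {set {set vtx}} :=
  [set row_edge c | c in 'Z_4] :|: [set col_edge c | c in 'Z_4]
  :|: [set diag_edge c | c in 'Z_4] :|: [set adiag_edge c | c in 'Z_4].

(** A position is given by Picker's set [P] and Chooser's set [C].
    [chooser_wins P C] : from position (P, C), with Picker to move,
    Chooser has a winning strategy (Chooser plays as Breaker: at the end,
    when every vertex is taken, Chooser owns a vertex of every edge). *)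
Inductive chooser_wins (P C : {set vtx}) : Prop :=
| cw_end :
    (forall v : vtx, v \in P :|: C) ->
    (forall e, e \in torus_edges -> exists2 v, v \in e & v \in C) ->
    chooser_wins P C
| cw_step :
    (exists x y : vtx, [/\ x \notin P :|: C, y \notin P :|: C & x != y]) ->
    (forall x y : vtx, x \notin P :|: C -> y \notin P :|: C -> x != y ->
        chooser_wins (y |: P) (x |: C) \/ chooser_wins (x |: P) (y |: C)) ->
    chooser_wins P C.

From mathcomp Require Import all_boot all_order all_algebra zify.
Import GRing.Theory.

(** Erdős–Selfridge: the potential of a position is the sum, over the lines
    Chooser has not hit yet, of [2 ^ (number of Picker's vertices on it)].  Of
    Chooser's two answers to an offer, one does not increase the potential, and
    a line owned by Picker contributes [16] on its own; so Chooser wins from any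
    position of potential below [16].  The empty board has potential exactly
    [16].  Since the torus is invariant under translations, Picker's first offer
    may be assumed to contain [(0, 0)], and for each of these 15 offers a finite
    search, cut off as soon as the potential drops below [16], finds a winning
    answer. *)

Section ResidualHypergraph.

Variable m : nat.

Definition potential (H : seq (seq nat)) : nat :=
  sumn [seq 2 ^ (m - size L) | L <- H].

(** Chooser keeps [i] and Picker gets [j]. *)
Definition move (i j : nat) (H : seq (seq nat)) : seq (seq nat) :=
  [seq rem j L | L <- [seq L <- H | i \notin L]].

Lemma potential_nil H : [::] \in H -> 2 ^ m <= potential H.
Proof.
move=> /(map_f (fun L => 2 ^ (m - size L))); rewrite subn0 => /perm_to_rem.
by rewrite /potential => /perm_sumn -> /=; apply: leq_addr.
Qed.

Lemma weight_rem (x : nat) (L : seq nat) : x \in L -> size L <= m ->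
  2 ^ (m - size (rem x L)) = (2 ^ (m - size L)).*2.
Proof.
move=> xL szL; rewrite size_rem // -mul2n -expnS; congr (2 ^ _).
by move: szL; case: L xL => //= _ L _; lia.
Qed.

Lemma potential_move i j H : {in H, forall L, size L <= m} ->
  potential (move i j H) + potential (move j i H) <= (potential H).*2.
Proof.
rewrite /potential /move; elim: H => //= L H IH /forall_cons[szL /IH {}IH].
case: (boolP (i \in L)) => iL; case: (boolP (j \in L)) => jL /=;
  rewrite ?(rem_id jL) ?(rem_id iL) ?weight_rem //; lia.
Qed.

End ResidualHypergraph.

Lemma pairwise_neq (T : eqType) (r : rel T) (s : seq T) : pairwise r s ->
  {in s &, forall x y, x != y -> r x y || r y x}.
Proof.
elim: s => //= z s IH /andP[/allP r_z /IH {}IH] x y.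
rewrite !in_cons => /predU1P[-> | xs] /predU1P[-> | ys]; rewrite ?eqxx //.
- by move=> _; rewrite r_z.
- by move=> _; rewrite r_z ?orbT.
- exact: IH.
Qed.

Section Automorphism.

Variables f g : vtx -> vtx.
Hypotheses (fK : cancel f g) (gK : cancel g f).
Hypothesis f_edges :
  {in torus_edges, forall e : {set vtx}, f @^-1: e \in torus_edges}.

Lemma chooser_wins_map :
  forall P C, chooser_wins P C -> chooser_wins (f @: P) (f @: C).
Proof.
have f_inj := can_inj fK.
have free_map (P C : {set vtx}) v : (f v \notin f @: P :|: f @: C) = (v \notin P :|: C).
  by rewrite -imsetU mem_imset.
(* [cw_step] nests [chooser_wins] under [\/], where [chooser_wins_ind] gives no
   induction hypothesis; hence the explicit [fix]. *)
fix IH 3 => P C [all_taken all_hit | [x [y [Fx Fy xy]]] answer].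
  apply: cw_end => [v | e /f_edges /all_hit[v ev Cv]].
    by rewrite -[v]gK -imsetU imset_f.
  by exists (f v); [move: ev; rewrite inE | rewrite imset_f].
apply: cw_step => [|x' y' Fx' Fy' xy'].
  by exists (f x), (f y); rewrite !free_map (inj_eq f_inj).
rewrite -[x']gK -[y']gK -!imsetU1 in Fx' Fy' xy' *.
rewrite !free_map (inj_eq f_inj) in Fx' Fy' xy'.
by case: (answer _ _ Fx' Fy' xy') => /IH; [left | right].
Qed.

End Automorphism.

Section Translation.

Local Open Scope ring_scope.

Variable t : vtx.

Let level_shift (h : vtx -> 'Z_4) (d c : 'Z_4) :
  (forall v, h (v + t) = h v + d) ->
  (fun v : vtx => v + t) @^-1: [set v | h v == c] = [set v | h v == c - d].
Proof.
by move=> hs; apply/setP => v; rewrite !inE hs [RHS]eq_sym subr_eq eq_sym.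
Qed.

Lemma translate_edges : {in torus_edges, forall e : {set vtx},
  (fun v : vtx => v + t) @^-1: e \in torus_edges}.
Proof.
move=> e /setUP[/setUP[/setUP[]|]|] /imsetP[c _ ->].
- by rewrite (@level_shift (fun v => v.2) t.2) // !in_setU imset_f.
- by rewrite (@level_shift (fun v => v.1) t.1) // !in_setU imset_f ?orbT.
- rewrite (@level_shift (fun v => v.1 - v.2) (t.1 - t.2)) => [|v].
    by rewrite !in_setU imset_f ?orbT.
  by rewrite /= opprD addrACA.
- rewrite (@level_shift (fun v => v.1 + v.2) (t.1 + t.2)) => [|v].
    by rewrite !in_setU imset_f ?orbT.
  by rewrite /= addrACA.
Qed.

Lemma chooser_wins_translate P C : chooser_wins P C ->
  chooser_wins [set v + t | v : vtx in P] [set v + t | v : vtx in C].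
Proof.
apply: (@chooser_wins_map (fun v => v + t) (fun v => v - t)) => [v | v |].
- exact: addrK.
- exact: subrK.
- exact: translate_edges.
Qed.

End Translation.

Definition code (v : vtx) : nat := 4 * v.1 + v.2.
Definition decode (k : nat) : vtx := (inZp (k %/ 4), inZp (k %% 4)).

Lemma codeK : cancel code decode.
Proof.
case=> a b; rewrite /code /decode /=.
by rewrite mulnC divnMDl // modnMDl divn_small ?modn_small ?addn0 ?valZpK.
Qed.

Lemma code_lt v : code v < 16.
Proof.
case: v => a b; rewrite /code /=.
have : a < 4 := ltn_ord a; have : b < 4 := ltn_ord b; lia.
Qed.

Lemma decodeK : {in gtn 16, cancel decode code}.
Proof. by move=> k; do 16?[case: k => [|k] //]. Qed.

Lemma eq_decode k l : k < 16 -> l < 16 -> (decode k == decode l) = (k == l).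
Proof. by move=> kl ll; apply/eqP/eqP => [|-> //]; apply: (can_in_inj decodeK). Qed.

Definition lines : seq (seq nat) :=
  [:: [:: 0; 4; 8; 12]; [:: 0; 1; 2; 3]; [:: 0; 5; 10; 15]; [:: 0; 13; 10; 7];
      [:: 1; 5; 9; 13]; [:: 4; 5; 6; 7]; [:: 4; 9; 14; 3]; [:: 4; 1; 14; 11];
      [:: 2; 6; 10; 14]; [:: 8; 9; 10; 11]; [:: 8; 13; 2; 7]; [:: 8; 5; 2; 15];
      [:: 3; 7; 11; 15]; [:: 12; 13; 14; 15]; [:: 12; 1; 6; 11]; [:: 12; 9; 6; 3]].

Lemma lines_wf : all (fun L => [&& uniq L, size L == 4 & all (gtn 16) L]) lines.
Proof. by []. Qed.

Lemma mem_line {L k} : L \in lines -> k \in L -> k < 16.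
Proof. by move=> /(allP lines_wf)/and3P[_ _ /allP]; apply. Qed.

Lemma line_uniq {L} : L \in lines -> uniq L.
Proof. by case/(allP lines_wf)/and3P. Qed.

Lemma line_size {L} : L \in lines -> size L = 4.
Proof. by case/(allP lines_wf)/and3P=> _ /eqP. Qed.

Lemma line_in_edge e : e \in torus_edges ->
  exists2 L, L \in lines & {in L, forall k, decode k \in e}.
Proof.
move=> e_edge; suff : has (fun L => all (fun k => decode k \in e) L) lines.
  by case/hasP=> L Ll /allP; exists L.
move: e_edge => /setUP[/setUP[/setUP[]|]|] /imsetP[c _ ->];
  under eq_has => L do under eq_all => k do rewrite inE;
  by case: c => [[|[|[|[|//]]]] ?]; vm_compute.
Qed.

Definition free_codes (P C : {set vtx}) : seq nat :=
  [seq k <- iota 0 16 | decode k \notin P :|: C].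

(** The residual hypergraph: the lines Chooser has not hit, stripped of
    Picker's vertices; a residual line [L] has weight [2 ^ (4 - size L)]. *)
Definition residual (P C : {set vtx}) : seq (seq nat) :=
  [seq [seq k <- L | decode k \notin P]
     | L <- lines & all (fun k => decode k \notin C) L].

Section Position.

Variables P C : {set vtx}.

Lemma mem_free_codes k :
  (k \in free_codes P C) = (k < 16) && (decode k \notin P :|: C).
Proof. by rewrite mem_filter mem_iota andbC. Qed.

Lemma free_code v : (code v \in free_codes P C) = (v \notin P :|: C).
Proof. by rewrite mem_free_codes code_lt codeK. Qed.

Lemma free_codes_uniq : uniq (free_codes P C).
Proof. by rewrite filter_uniq ?iota_uniq. Qed.

Lemma residual_size L : L \in residual P C -> size L <= 4.
Proof.
case/mapP=> L0 /[!mem_filter] /andP[_ L0l] ->.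
by rewrite size_filter (leq_trans (count_size _ _)) ?(line_size L0l).
Qed.

Lemma free_codes_swap x y :
  free_codes (y |: P) (x |: C) = free_codes (x |: P) (y |: C).
Proof. by rewrite /free_codes setUACA [[set y] :|: _]setUC -setUACA. Qed.

Variables i j : nat.
Hypotheses (Fi : i \in free_codes P C) (Fj : j \in free_codes P C) (ij : i != j).

Let i16 : i < 16. Proof. by move: Fi; rewrite mem_free_codes => /andP[]. Qed.
Let j16 : j < 16. Proof. by move: Fj; rewrite mem_free_codes => /andP[]. Qed.

Lemma free_codes_move :
  free_codes (decode j |: P) (decode i |: C) = rem j (rem i (free_codes P C)).
Proof.
rewrite rem_filter ?rem_uniq ?free_codes_uniq // rem_filter ?free_codes_uniq //.
rewrite /free_codes -!filter_predI; apply: eq_in_filter => k; rewrite mem_iota => /= k16.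
rewrite !inE !eq_decode //.
by case: (k == i); case: (k == j); rewrite ?orbT ?andbF.
Qed.

Lemma size_free_codes_move :
  size (free_codes (decode j |: P) (decode i |: C)) = (size (free_codes P C)).-2.
Proof. by rewrite free_codes_move size_rem ?size_rem // rem_mem // eq_sym. Qed.

Lemma residual_move :
  residual (decode j |: P) (decode i |: C) = move i j (residual P C).
Proof.
have Pi : decode i \notin P.
  by move: Fi; rewrite mem_free_codes inE negb_or => /and3P[].
rewrite /residual /move filter_map -map_comp -filter_predI.
have keep L : L \in lines -> all (fun k => decode k \notin decode i |: C) L =
    (i \notin [seq k <- L | decode k \notin P]) && all (fun k => decode k \notin C) L.
  move=> Ll; rewrite mem_filter Pi /=.
  under eq_in_all => k kL do rewrite in_setU1 negb_or eq_decode ?(mem_line Ll kL) //.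
  by rewrite all_predI all_predC has_pred1.
rewrite (eq_in_filter keep); apply/eq_in_map => L; rewrite mem_filter => /andP[_ Ll] /=.
rewrite rem_filter ?filter_uniq ?(line_uniq Ll) // -filter_predI.
by apply: eq_in_filter => k kL; rewrite /= in_setU1 negb_or eq_decode ?(mem_line Ll kL).
Qed.

End Position.

Lemma chooser_wins_end P C :
  free_codes P C = [::] -> [::] \notin residual P C -> chooser_wins P C.
Proof.
move=> no_free no_empty; apply: cw_end => [v | e /line_in_edge[L Ll Le]].
  by apply/negPn; rewrite -free_code no_free.
have [/hasP[k kL Ck] | /hasPn noC] := boolP (has (fun k => decode k \in C) L).
  by exists (decode k); rewrite ?Le.
case/negP: no_empty; apply/mapP; exists L.
  by rewrite mem_filter Ll andbT; apply/allP.
rewrite -(filter_pred0 L); apply: eq_in_filter => k kL.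
have := mem_free_codes P C k; rewrite no_free in_nil (mem_line Ll kL) in_setU.
by rewrite (negPf (noC k kL)) orbF /= => <-.
Qed.

Lemma chooser_wins_step P C : 1 < size (free_codes P C) ->
  (forall i j, i \in free_codes P C -> j \in free_codes P C -> i != j ->
     chooser_wins (decode j |: P) (decode i |: C) \/
     chooser_wins (decode i |: P) (decode j |: C)) ->
  chooser_wins P C.
Proof.
move=> two_free answer; apply: cw_step => [|x y Fx Fy xy].
  have := free_codes_uniq P C; have := mem_free_codes P C.
  case: (free_codes P C) two_free => [|i [|j fr]] // _ Fmem /andP[].
  rewrite in_cons negb_or => /andP[ij _] _.
  have /andP[i16 Fi] : (i < 16) && (decode i \notin P :|: C).
    by rewrite -Fmem mem_head.
  have /andP[j16 Fj] : (j < 16) && (decode j \notin P :|: C).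
    by rewrite -Fmem !inE eqxx orbT.
  by exists (decode i), (decode j); rewrite eq_decode.
rewrite -[x]codeK -[y]codeK; apply: answer; rewrite ?free_code //.
by apply: contra xy => /eqP/(can_inj codeK)->.
Qed.

Lemma chooser_wins_of_potential n P C : size (free_codes P C) = n.*2 ->
  potential 4 (residual P C) < 2 ^ 4 -> chooser_wins P C.
Proof.
elim: n P C => [|n IHn] P C size_free low.
  apply: chooser_wins_end; first exact: size0nil.
  by apply: contraL low => /potential_nil; rewrite -leqNgt.
apply: chooser_wins_step => [|i j Fi Fj ij]; first by rewrite size_free.
have := @potential_move 4 i j _ (residual_size P C).
rewrite -residual_move // -residual_move ?(eq_sym j) //.
have child_size x y : x \in free_codes P C -> y \in free_codes P C -> x != y ->
    size (free_codes (decode y |: P) (decode x |: C)) = n.*2.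
  by move=> Fx Fy xy; rewrite size_free_codes_move // size_free.
set w := potential 4 (residual (decode j |: P) (decode i |: C)).
case: (ltnP w (2 ^ 4)) => [lt | ge] pot.
  by left; apply: IHn; rewrite ?child_size.
by right; apply: IHn; rewrite ?child_size 1?eq_sym //; lia.
Qed.

(** [&&] and [||] are strict under [vm_compute], hence the explicit [if]s in
    the search below. *)
Fixpoint all_pairs (r : rel nat) (s : seq nat) : bool :=
  if s is x :: s' then (if all (r x) s' then all_pairs r s' else false) else true.

Lemma all_pairsE r s : all_pairs r s = pairwise r s.
Proof. by elim: s => //= x s <-; case: all. Qed.

(** Offered [{i, j}], Chooser first tries the answer with the smaller
    potential; this ordering only speeds up the search. *)
Definition answer (search : seq nat -> seq (seq nat) -> bool)
    (fr : seq nat) (H : seq (seq nat)) (i j : nat) : bool :=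
  let fr' := rem j (rem i fr) in
  let H1 := move i j H in let H2 := move j i H in
  if potential 4 H1 <= potential 4 H2
  then (if search fr' H1 then true else search fr' H2)
  else (if search fr' H2 then true else search fr' H1).

Fixpoint chooser_search (n : nat) (fr : seq nat) (H : seq (seq nat)) : bool :=
  if potential 4 H < 2 ^ 4 then true else
  if n is n'.+1 then all_pairs (answer (chooser_search n') fr H) fr else false.

Lemma answer_sound {n P C i j} :
  (forall P' C', size (free_codes P' C') = n.*2 ->
     chooser_search n (free_codes P' C') (residual P' C') -> chooser_wins P' C') ->
  size (free_codes P C) = n.+1.*2 ->
  i \in free_codes P C -> j \in free_codes P C -> i != j ->
  answer (chooser_search n) (free_codes P C) (residual P C) i j ->
  chooser_wins (decode j |: P) (decode i |: C) \/
  chooser_wins (decode i |: P) (decode j |: C).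
Proof.
move=> search_sound size_free Fi Fj ij.
have ji : j != i by rewrite eq_sym.
have child_size : size (rem j (rem i (free_codes P C))) = n.*2.
  by rewrite -free_codes_move // size_free_codes_move // size_free.
have either b x y :
    (if b then (if x then true else y) else (if y then true else x)) = x || y.
  by case: b; rewrite // orbC.
rewrite /answer either => /orP[] win; [left | right]; apply: search_sound.
- by rewrite free_codes_move.
- by rewrite free_codes_move // residual_move.
- by rewrite free_codes_swap free_codes_move.
- by rewrite free_codes_swap free_codes_move // residual_move.
Qed.

Lemma chooser_search_sound n P C : size (free_codes P C) = n.*2 ->
  chooser_search n (free_codes P C) (residual P C) -> chooser_wins P C.
Proof.
elim: n P C => [|n IHn] P C size_free /=.
  by case: ifP => // low _; apply: chooser_wins_of_potential size_free low.
case: ifP => [low _ | _]; first exact: chooser_wins_of_potential size_free low.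
rewrite all_pairsE => /pairwise_neq answers.
apply: chooser_wins_step => [|i j Fi Fj ij]; first by rewrite size_free.
have ji : j != i by rewrite eq_sym.
case/orP: (answers i j Fi Fj ij) => win.
  exact: answer_sound IHn size_free Fi Fj ij win.
by case: (answer_sound IHn size_free Fj Fi ji win); [right | left].
Qed.

Lemma free_codes0 : free_codes set0 set0 = iota 0 16.
Proof. by apply/all_filterP/allP => k _; rewrite setU0 inE. Qed.

Lemma residual0 : residual set0 set0 = lines.
Proof.
rewrite /residual (@eq_filter _ _ predT) ?filter_predT => [|L].
  rewrite (@eq_map _ _ _ id) ?map_id // => L.
  by apply/all_filterP/allP => k _; rewrite inE.
by apply/allP => k _; rewrite inE.
Qed.

Lemma first_offer_answer (z : vtx) : z != 0%R ->
  chooser_wins [set z] [set 0%R : vtx] \/ chooser_wins [set 0%R : vtx] [set z].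
Proof.
move=> z_neq0; have decode0 : decode 0 = 0%R by apply/eqP.
have code_neq0 : 0 != code z.
  by apply: contra z_neq0 => /eqP code0; rewrite -[z]codeK -code0.
have free0 k : k < 16 -> k \in free_codes set0 set0 by rewrite free_codes0 mem_iota.
have size0 : size (free_codes set0 set0) = 8.*2 by rewrite free_codes0.
have /allP/(_ (code z)) : all (answer (chooser_search 7) (iota 0 16) lines 0) (iota 1 15).
  by vm_compute.
rewrite mem_iota lt0n eq_sym code_neq0 code_lt -free_codes0 -residual0 => /(_ isT).
move=> /(answer_sound (chooser_search_sound 7) size0 (free0 0 isT)).
move=> /(_ (free0 _ (code_lt z)) code_neq0).
by rewrite codeK decode0 !setU0.
Qed.

Theorem proposition11 : chooser_wins set0 set0.
Proof.
apply: cw_step => [|x y _ _ xy].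
  by exists (decode 0), (decode 1); rewrite !inE.
have := first_offer_answer (y - x)%R; rewrite subr_eq0 eq_sym (negbTE xy).
case=> // /(chooser_wins_translate x);
  rewrite !imset_set1 subrK add0r !setU0 => win; [left | right]; exact: win.
Qed.
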